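(* Let $R$ be a commutative Noetherian ring with unity. The vertex set of $\Gamma_E(R)$ is infinite if and only if there exists $x\in R$ such that $\operatorname{ann}(x)$ is a maximal element of $\mathfrak F=\{\operatorname{ann}(z)\mid 0\neq z\in R\}$ (so $\operatorname{ann}(x)$ is an associated prime of $R$) and $\deg[x]=\infty$.
   Context: For $x,y\in R$ write $x\sim y$ iff $\operatorname{ann}(x)=\operatorname{ann}(y)$; $[x]$ denotes the equivalence class of $x$. Let $Z^*(R)$ be the set of nonzero zero divisors of $R$. The graph $\Gamma_E(R)$ is the simple graph whose vertices are the classes $[x]$ with $x\in Z^*(R)$, two distinct vertices $[x],[y]$ being adjacent iff $xy=0$. The degree of a vertex is the number (possibly infinite) of vertices adjacent to it. An associated prime of $R$ is a prime ideal of the form $\operatorname{ann}(y)$, $y\in R$. *)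

From HB Require Import structures.
From mathcomp Require Import all_boot all_order all_algebra.
From mathcomp Require Import boolp classical_sets cardinality.
Set Implicit Arguments. Unset Strict Implicit. Unset Printing Implicit Defensive.
Import GRing.Theory.
Local Open Scope ring_scope.
Local Open Scope classical_set_scope.

Section Defs.
Variable R : comNzRingType.

Definition is_ideal (I : set R) : Prop :=
  I 0 /\ (forall a b, I a -> I b -> I (a + b)) /\ (forall r a, I a -> I (r * a)).

Definition noetherian : Prop :=
  forall I : nat -> set R, (forall n, is_ideal (I n)) ->
    (forall n, I n `<=` I n.+1) ->
    exists N, forall n, (N <= n)%N -> I n = I N.

Definition ann (x : R) : set R := [set y | x * y = 0].

Definition eclass (x : R) : set R := [set y | ann y = ann x].

Definition Zstar : set R := [set x | x != 0 /\ exists y, y != 0 /\ x * y = 0].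

Definition GE_vertices : set (set R) := [set eclass x | x in Zstar].

Definition GE_adj (V W : set R) : Prop :=
  GE_vertices V /\ GE_vertices W /\ V <> W /\
  exists a b, V = eclass a /\ W = eclass b /\ a * b = 0.

(* the set of neighbours of a vertex; degree is its cardinality *)
Definition GE_nbhd (V : set R) : set (set R) := [set W | GE_adj V W].

Definition annF : set (set R) := [set ann z | z in [set z | z != 0]].

Definition maximal_in_annF (x : R) : Prop :=
  annF (ann x) /\ forall z, z != 0 -> ann x `<=` ann z -> ann z = ann x.

End Defs.

From HB Require Import structures.
From mathcomp Require Import all_boot all_order all_algebra.
From mathcomp Require Import boolp classical_sets functions cardinality.
Import GRing.Theory.
Local Open Scope ring_scope.
Local Open Scope classical_set_scope.

(* If y w = 0 with w <> 0, Noetherianity puts ann w inside a maximal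
   annihilator ann x; then x y = 0, so every vertex is [x] or adjacent to [x].
   There are only finitely many maximal annihilators: if ann x_0, ann x_1, ...
   were distinct, Noetherianity gives x_N = sum_(i<N) r_i x_i, and choosing
   a_i with x_i a_i = 0 <> x_N a_i, the primality of ann x_N makes
   x_N * prod_(i<N) a_i both nonzero and zero.  So the vertices are covered by
   finitely many closed neighbourhoods [x] |` N([x]) with ann x maximal. *)

Section Annihilators.
Variable R : comNzRingType.

Lemma ann_ideal (x : R) : is_ideal (ann x).
Proof.
split; first by rewrite /ann /= mulr0.
split; first by move=> a b ha hb; rewrite /ann /= mulrDr ha hb addr0.
by move=> r a ha; rewrite /ann /= mulrCA ha mulr0.
Qed.

Lemma eclass_ann (x y : R) : ann x = ann y -> eclass x = eclass y.
Proof. by rewrite /eclass => ->. Qed.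

Lemma maximal_annF_neq0 {x : R} : maximal_in_annF x -> x != 0.
Proof.
move=> [[z /= z0 ann_zx] _]; apply/eqP => x0.
have : ann x 1 by rewrite /ann /= x0 mul0r.
by rewrite -ann_zx /ann /= mulr1 => z_eq0; rewrite z_eq0 eqxx in z0.
Qed.

Lemma maximal_annF_prime {x a b : R} : maximal_in_annF x ->
  x * (a * b) = 0 -> x * a = 0 \/ x * b = 0.
Proof.
move=> [_ maxx] xab; have [xa|xa] := eqVneq (x * a) 0; [by left | right].
have sub : ann x `<=` ann (x * a).
  by move=> y; rewrite /ann /= => xy; rewrite mulrAC xy mul0r.
have : ann (x * a) b by rewrite /ann /= -mulrA.
by rewrite (maxx _ xa sub).
Qed.

Lemma maximal_annF_prod_neq0 {x : R} {I : Type} {r : seq I} {P : pred I}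
    {f : I -> R} :
  maximal_in_annF x -> (forall i, P i -> x * f i != 0) ->
  x * \prod_(i <- r | P i) f i != 0.
Proof.
move=> mx xf; apply: (big_ind (fun p => x * p != 0)) => //.
  by rewrite mulr1 (maximal_annF_neq0 mx).
by move=> a b xa xb; apply/eqP => /(maximal_annF_prime mx)[]; apply/eqP.
Qed.

Lemma maximal_annF_separate {x y : R} : maximal_in_annF x -> y != 0 ->
  ann x <> ann y -> exists a, x * a = 0 /\ y * a != 0.
Proof.
move=> [_ maxx] y0 neq; have [sub|] := pselect (ann x `<=` ann y).
  by have := maxx _ y0 sub => /esym.
move=> /existsNP[a /not_implyP[xa ya]]; exists a; split => //.
exact/eqP.
Qed.

Hypothesis HR : noetherian R.

Lemma noetherian_maximal (F : set (set R)) (I0 : set R) :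
  (forall I, F I -> is_ideal I) -> F I0 ->
  exists I, F I /\ forall J, F J -> I `<=` J -> J = I.
Proof.
move=> Fideal FI0; apply: contrapT => nomax.
have step I : exists J, F I -> [/\ F J, I `<=` J & J <> I].
  have [FI|] := pselect (F I); last by exists I.
  have /existsNP[J] : ~ forall J, F J -> I `<=` J -> J = I.
    by move=> maxI; apply: nomax; exists I.
  by move=> /not_implyP[FJ /not_implyP[IJ JI]]; exists J.
have [f fP] := choice step.
pose C n := iter n f I0.
have FC n : F (C n) by elim: n => //= n IH; have [] := fP _ IH.
have [N CN] := HR C (fun n => Fideal _ (FC n))
  (fun n => let: And3 _ sub _ := fP _ (FC n) in sub).
by have [_ _] := fP _ (FC N); apply; apply: (CN N.+1).
Qed.

Lemma maximal_annF_above (w : R) : w != 0 ->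
  exists x, maximal_in_annF x /\ ann w `<=` ann x.
Proof.
move=> w0.
pose F := [set ann z | z in [set z | z != 0 /\ ann w `<=` ann z]].
have [_ [[x [x0 wx] <-] maxF]] : exists I, F I /\ forall J, F J -> I `<=` J -> J = I.
  apply: (noetherian_maximal F (ann w)); first by move=> _ [z _ <-]; exact: ann_ideal.
  by exists w => //; split.
exists x; split => //; split; first by exists x.
by move=> z z0 xz; apply: maxF => //; exists z => //; split => //;
  apply: subset_trans xz.
Qed.

Lemma vertex_near_maximal_annF (V : set R) : GE_vertices V ->
  exists2 x, maximal_in_annF x & V = eclass x \/ GE_nbhd (eclass x) V.
Proof.
move=> [y [y0 [w [w0 yw]]] <-].
have [x [mx wx]] := maximal_annF_above w w0.
have xy : x * y = 0 by apply: wx; rewrite /ann /= mulrC.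
exists x => //; have [->|neq] := pselect (eclass y = eclass x); [by left|right].
split; first by exists x => //; split; [exact: maximal_annF_neq0 | exists y].
split; first by exists y => //; split => //; exists w.
by split; [move=> e; apply: neq | exists x, y].
Qed.

Lemma noetherian_seq_dependent (xs : nat -> R) :
  exists N (r : nat -> R), xs N = \sum_(i < N) r i * xs i.
Proof.
pose span n : set R := [set a | exists r : nat -> R, a = \sum_(i < n) r i * xs i].
have span_ideal n : is_ideal (span n).
  split; first by exists (fun=> 0); rewrite big1 // => i _; rewrite mul0r.
  split.
    move=> _ _ [r1 ->] [r2 ->]; exists (fun i => r1 i + r2 i).
    by rewrite -big_split; apply: eq_bigr => i _; rewrite mulrDl.
  move=> c _ [r ->]; exists (fun i => c * r i).
  by rewrite mulr_sumr; apply: eq_bigr => i _; rewrite mulrA.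
have span_mono n : span n `<=` span n.+1.
  move=> _ [r ->]; exists (fun i => if (i < n)%N then r i else 0).
  rewrite big_ord_recr /= ltnn mul0r addr0.
  by apply: eq_bigr => i _; rewrite ltn_ord.
have [N spanN] := HR span span_ideal span_mono.
have : span N.+1 (xs N).
  exists (fun i => (i == N)%:R).
  rewrite big_ord_recr /= eqxx mul1r big1 ?add0r // => i _.
  by rewrite (ltn_eqF (ltn_ord i)) mul0r.
by rewrite spanN // => -[r xsN]; exists N, r.
Qed.

Lemma finite_maximal_classes : finite_set [set eclass x | x in @maximal_in_annF R].
Proof.
apply: contrapT => /infiniteP/pcard_leP[g].
have /choice[xs xsP] n : exists x, maximal_in_annF x /\ eclass x = g n.
  have [x mx <-] : [set eclass x | x in @maximal_in_annF R] (g n) by exact: funS.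
  by exists x.
have g_inj m n : g m = g n -> m = n by apply: (@inj _ _ _ g); rewrite ?inE.
have [N [r xsN]] := noetherian_seq_dependent xs.
have xsN0 := maximal_annF_neq0 (xsP N).1.
have /choice[a aP] i : exists a, (i < N)%N -> xs i * a = 0 /\ xs N * a != 0.
  have [iN|] := ltnP i N; last by exists 0.
  have [|b ?] := maximal_annF_separate (xsP i).1 xsN0; last by exists b.
  move=> /eclass_ann; rewrite (xsP i).2 (xsP N).2 => /g_inj iNeq.
  by move: iN; rewrite iNeq ltnn.
have := maximal_annF_prod_neq0 (r := index_enum 'I_N) (P := xpredT) (xsP N).1
  (fun i _ => (aP i (ltn_ord i)).2).
rewrite {1}xsN mulr_suml big1 ?eqxx // => i _.
by rewrite (bigD1 i) //= -mulrA [xs i * _]mulrA (aP i (ltn_ord i)).1 mul0r mulr0.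
Qed.

End Annihilators.

Theorem proposition2p2 (R : comNzRingType) (HR : noetherian R) :
  ~ finite_set (@GE_vertices R) <->
  exists x : R, maximal_in_annF x /\ ~ finite_set (GE_nbhd (eclass x)).
Proof.
split=> [infV|[x [_ inf_nbhd]] finV]; last first.
  by apply: inf_nbhd; apply: sub_finite_set finV => W [_ []].
apply: contrapT => nomax; apply: infV.
apply: (sub_finite_set (B := \bigcup_(V in [set eclass x | x in @maximal_in_annF R])
                                (V |` GE_nbhd V))).
  move=> V /(@vertex_near_maximal_annF R HR)[x mx nearV].
  by exists (eclass x); [exists x | case: nearV => [->|]; [left|right]].
apply: bigcup_finite; first exact: finite_maximal_classes.
move=> _ [x mx <-]; rewrite finite_setU; split; first exact: finite_set1.
by apply: contrapT => inf_x; apply: nomax; exists x.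
Qed.
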